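(* Let $p\ge 1$, let $(X,Y)$ be random with $Y\in\{0,1\}$, let $f:\mathcal{X}\to[0,1]$ be any model and let $\mathcal{B}=\{I_1,\dots,I_B\}$ be any binning scheme. Then $\ell_p\text{-CE}(f_{\mathcal{B}})\le \ell_p\text{-CE}(f)$.
   Context: For $h:\mathcal{X}\to[0,1]$, $\ell_p\text{-CE}(h)=\big(\mathbb{E}\big[|h(X)-\mathbb{E}[Y\mid h(X)]|^p\big]\big)^{1/p}$. A binning scheme of size $B$ is a set of $B$ intervals $I_1,\dots,I_B$ partitioning $[0,1]$; for $z\in[0,1]$, $\beta(z)$ is the index $j$ with $z\in I_j$. The binned model is $f_{\mathcal{B}}(x)=\mathbb{E}\big[f(X)\mid f(X)\in I_{\beta(f(x))}\big]$. *)

From HB Require Import structures.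
From mathcomp Require Import all_boot all_order all_algebra.
From mathcomp Require Import all_classical all_reals all_analysis.
Set Implicit Arguments. Unset Strict Implicit. Unset Printing Implicit Defensive.
Import Order.TTheory GRing.Theory Num.Theory.
Local Open Scope classical_set_scope.
Local Open Scope ring_scope.

Section defs.
Context {d : measure_display} {Omega : measurableType d} {R : realType}.
Context {dX : measure_display} {Xs : measurableType dX}.

Definition binning_scheme (B : nat) (I : 'I_B -> interval R) : Prop :=
  (forall j, exists z : R, z \in I j) /\
  (forall j k (z : R), z \in I j -> z \in I k -> j = k) /\
  (forall z : R, (exists j, z \in I j) <-> (0 <= z <= 1)).

Definition beta (B : nat) (I : 'I_B -> interval R) (z : R) : option 'I_B :=
  [pick j | z \in I j].

(* E[f(X) | f(X) \in I_j] = E[f(X) 1_{f(X) \in I_j}] / P(f(X) \in I_j). *)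
Definition bin_mean (P : probability Omega R) (X : Omega -> Xs) (f : Xs -> R)
  (B : nat) (I : 'I_B -> interval R) (j : 'I_B) : R :=
  fine (\int[P]_(w in (f \o X) @^-1` [set z | z \in I j]) (f (X w))%:E) /
  fine (P ((f \o X) @^-1` [set z | z \in I j])).

Definition binned_model (P : probability Omega R) (X : Omega -> Xs)
  (f : Xs -> R) (B : nat) (I : 'I_B -> interval R) (x : Xs) : R :=
  match beta I (f x) with
  | Some j => bin_mean P X f I j
  | None => 0
  end.

(* g \o W is a version of the conditional expectation E[Z | W]:
   g is Borel and E[Z 1_{W in A}] = E[g(W) 1_{W in A}] for every Borel A
   (by Doob-Dynkin every sigma(W)-measurable variable has the form g \o W). *)
Definition cond_exp_version (P : probability Omega R) (Z : Omega -> R)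
  (W : Omega -> R) (g : R -> R) : Prop :=
  measurable_fun setT g /\
  forall A : set R, measurable A ->
    (\int[P]_(w in W @^-1` A) (Z w)%:E =
     \int[P]_(w in W @^-1` A) (g (W w))%:E)%E.

(* l_p-CE(h) = (E |h(X) - E[Y | h(X)]|^p)^(1/p), where g is a version of
   the conditional expectation E[Y | h(X)] (as a function of h(X)). *)
Definition lp_CE (P : probability Omega R) (X : Omega -> Xs) (Y : Omega -> R)
  (h : Xs -> R) (g : R -> R) (p : R) : \bar R :=
  Lnorm P p%:E (fun w => (h (X w) - g (h (X w)))%:E).

End defs.

(* On each fibre {W = c} of the binned score W = f_B(X) the binned model is
   constant, equal to c, and the bins merged into that fibre have mean score c;
   so E[f(X) - g(f(X)) | W = c] = c - gB(c), since Y has the same integral as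
   g(f(X)) and as gB(W) over the fibre (a set of both sigma(f(X)) and
   sigma(W)).  Jensen's inequality for x |-> |x|^p on each of the finitely
   many fibres then gives E|W - gB(W)|^p <= E|f(X) - g(f(X))|^p. *)

From HB Require Import structures.
From mathcomp Require Import all_boot all_order all_algebra.
From mathcomp Require Import all_classical all_reals all_analysis.
From mathcomp Require Import measurable_realfun lra.

Set Implicit Arguments.
Unset Strict Implicit.
Unset Printing Implicit Defensive.
Import Order.TTheory GRing.Theory Num.Theory.
Local Open Scope classical_set_scope.
Local Open Scope ring_scope.

(* Young's inequality for x and a^(p-1), as (p-1) q = p for the conjugate exponent q. *)
Lemma powR_young_tangent (R : realType) (p a x : R) : 1 < p -> 0 <= a -> 0 <= x ->
  a `^ (p - 1) * x <= x `^ p / p + a `^ p * (1 - p^-1).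
Proof.
move=> p1 a0 x0.
have p0 : 0 < p by rewrite (lt_trans ltr01).
pose q := p / (p - 1).
have q0 : 0 < q by rewrite divr_gt0 ?subr_gt0.
have qV : q^-1 = 1 - p^-1 by rewrite /q invf_div mulrBl mulfV ?gt_eqF// mul1r.
have pq : p^-1 + q^-1 = 1 by rewrite qV addrC subrK.
have := conjugate_powR x0 (powR_ge0 a (p - 1)) p0 q0 pq.
by rewrite -powRrM /q [(p - 1) * _]mulrC divfK ?gt_eqF ?subr_gt0// qV mulrC.
Qed.

Section integral_lemmas.
Local Open Scope ereal_scope.
Context d (T : measurableType d) (R : realType) (mu : {measure set T -> \bar R}).

Lemma jensen_powR (A : set T) (h : T -> R) (a p : R) :
  measurable A -> measurable_fun A h -> (forall x, A x -> (0 <= h x)%R) ->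
  (1 <= p)%R -> (0 <= a)%R -> mu A < +oo ->
  a%:E * mu A <= \int[mu]_(x in A) (h x)%:E ->
  (a `^ p)%:E * mu A <= \int[mu]_(x in A) (h x `^ p)%:E.
Proof.
move=> mA mh h0 p1 a0 muAoo hmean.
have mhE : measurable_fun A (EFin \o h) by exact/measurable_EFinP.
have mhpE : measurable_fun A (fun x => (h x `^ p)%:E).
  by apply/measurable_EFinP; exact: (measurableT_comp (measurable_powR p) mh).
have [p_eq1|pn1] := eqVneq p 1%R.
  subst p; rewrite powRr1//; apply: (le_trans hmean); apply: ge0_le_integral => //.
  by move=> x Ax; rewrite powRr1 ?h0.
have {pn1}p1 : (1 < p)%R by rewrite lt_neqAle eq_sym pn1.
have p0 : (0 < p)%R by rewrite (lt_trans ltr01).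
have [->|an0] := eqVneq a 0%R.
  by rewrite powR0 ?gt_eqF// mul0e integral_ge0// => x _; rewrite lee_fin powR_ge0.
set K := \int[mu]_(x in A) _.
have K0 : 0 <= K by apply: integral_ge0 => x _; rewrite lee_fin powR_ge0.
have [->|Kny] := eqVneq K +oo; first exact: leey.
have Kfin : K \is a fin_num by rewrite ge0_fin_numE// ltey.
have muAfin : mu A \is a fin_num by rewrite ge0_fin_numE.
pose c := (a `^ p * (1 - p^-1))%R.
have c0 : (0 <= c)%R by rewrite mulr_ge0 ?powR_ge0// subr_ge0 invf_le1// ltW.
have hp0 : forall x, A x -> 0 <= (h x `^ p)%:E.
  by move=> x _; rewrite lee_fin powR_ge0.
have tangent : (a `^ (p - 1))%:E * (a%:E * mu A) <= K * (p^-1)%:E + c%:E * mu A.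
  apply: (le_trans (lee_wpmul2l _ hmean)); first by rewrite lee_fin powR_ge0.
  rewrite -(ge0_integralZl_EFin _ mA _ mhE (powR_ge0 _ _)); last first.
    by move=> x Ax; rewrite lee_fin h0.
  rewrite -(ge0_integralZr _ mA mhpE hp0); last by rewrite lee_fin invr_ge0 ltW.
  rewrite -(integral_cst _ mA) -ge0_integralD; last 5 first.
  - exact: mA.
  - by move=> x Ax; rewrite -EFinM lee_fin mulr_ge0 ?powR_ge0// invr_ge0 ltW.
  - by apply: emeasurable_funM => //; exact: measurable_cst.
  - by move=> x _; rewrite lee_fin.
  - exact: measurable_cst.
  apply: ge0_le_integral => //.
  - by move=> x Ax; rewrite -EFinM lee_fin mulr_ge0 ?powR_ge0 ?h0.
  - by apply: emeasurable_funM => //; exact: measurable_cst.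
  - by apply: emeasurable_funD => //; apply: emeasurable_funM => //; exact: measurable_cst.
  - move=> x Ax /=; rewrite -!EFinM -EFinD lee_fin.
    by apply: powR_young_tangent => //; exact: h0.
have apE : (a `^ (p - 1) * a = a `^ p)%R.
  by rewrite -{2}(powRr1 a0) -powRD ?subrK// an0 implybT.
have pV0 : (0 < p^-1)%R by rewrite invr_gt0.
move: tangent; rewrite -(fineK muAfin) -(fineK Kfin) -!EFinM -EFinD !lee_fin.
by rewrite mulrA apE /c => tangent; rewrite -(ler_pM2r pV0); nra.
Qed.

Lemma ge0_integral_partition (D : set T) (I : eqType) (s : seq I)
    (E : I -> set T) (h : T -> \bar R) :
  measurable D -> uniq s -> (forall i, measurable (E i)) ->
  (forall x, D x -> exists2 i, i \in s & E i x) ->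
  (forall i j x, i \in s -> j \in s -> E i x -> E j x -> i = j) ->
  measurable_fun D h -> (forall x, D x -> 0 <= h x) ->
  \int[mu]_(x in D) h x = \sum_(i <- s) \int[mu]_(x in D `&` E i) h x.
Proof.
move=> mD us mE cover disj mh h0.
transitivity (\int[mu]_(x in D) \sum_(i <- s) (h x * (\1_(E i) x)%:E)).
  apply: eq_integral => x /[!inE] Dx; have [i si Eix] := cover x Dx.
  rewrite (bigD1_seq i) //= indicE mem_set // mule1 big_seq_cond big1 ?adde0 //.
  move=> j /andP[sj ji]; rewrite indicE memNset ?mule0 // => Ejx.
  by move/eqP: ji; apply; exact: disj Ejx Eix.
rewrite ge0_integral_sum //; last 2 first.
- move=> i; apply: emeasurable_funM => //.
  by apply/measurable_EFinP; exact: measurable_indic.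
- by move=> i x Dx; rewrite mule_ge0 ?h0 // lee_fin indicE.
apply: eq_bigr => i _; rewrite integral_mkcondr.
by apply: eq_integral => x _; rewrite epatch_indic.
Qed.

Lemma le_Lnorm (f g : T -> R) (p : R) : (0 < p)%R ->
  \int[mu]_x (`|f x| `^ p)%:E <= \int[mu]_x (`|g x| `^ p)%:E ->
  'N[mu]_p%:E[EFin \o f] <= 'N[mu]_p%:E[EFin \o g].
Proof.
move=> p0 fg; rewrite unlock /=.
apply: gt0_ler_poweR => //; first by rewrite invr_ge0 ltW.
- by rewrite in_itv /= leey andbT integral_ge0 // => x _; rewrite lee_fin powR_ge0.
- by rewrite in_itv /= leey andbT integral_ge0 // => x _; rewrite lee_fin powR_ge0.
Qed.

End integral_lemmas.

Section fibre_jensen.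
Local Open Scope ereal_scope.
Context d (T : measurableType d) (R : realType).
Variable mu : {finite_measure set T -> \bar R}.

(* Integrability of Z on a fibre need not be assumed: without it the Jensen step is
   trivial, the integral of |Z| over the fibre being +oo. *)
Lemma le_integral_powR_fibres (W Z : T -> R) (psi : R -> R) (s : seq R) (p : R) :
  (1 <= p)%R -> measurable_fun setT W -> measurable_fun setT Z ->
  measurable_fun setT psi ->
  (forall x, W x \in s) ->
  (forall c, c \in s -> mu.-integrable (W @^-1` [set c]) (EFin \o Z) ->
    \int[mu]_(x in W @^-1` [set c]) (Z x)%:E = (psi c)%:E * mu (W @^-1` [set c])) ->
  \int[mu]_x (`|psi (W x)| `^ p)%:E <= \int[mu]_x (`|Z x| `^ p)%:E.
Proof.
move=> p1 mW mZ mpsi Ws Zmean.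
pose A c := W @^-1` [set c].
have mA c : measurable (A c) by rewrite -[A c]setTI; exact: mW.
have cover x : [set: T] x -> exists2 c, c \in undup s & A c x.
  by move=> _; exists (W x); rewrite ?mem_undup ?Ws.
have disj c c' x : c \in undup s -> c' \in undup s -> A c x -> A c' x -> c = c'.
  by move=> _ _ <- <-.
have mpsiW : measurable_fun setT (fun x => (`|psi (W x)| `^ p)%:E).
  apply/measurable_EFinP; apply: measurableT_comp (measurable_powR p) _.
  exact: measurableT_comp (@normr_measurable R setT) (measurableT_comp mpsi mW).
have mZ_p : measurable_fun setT (fun x => (`|Z x| `^ p)%:E).
  apply/measurable_EFinP; apply: measurableT_comp (measurable_powR p) _.
  exact: measurableT_comp (@normr_measurable R setT) mZ.
have powR_ge0E (h : T -> R) x : [set: T] x -> 0 <= (`|h x| `^ p)%:E.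
  by move=> _; rewrite lee_fin powR_ge0.
have partition := ge0_integral_partition mu measurableT (undup_uniq s) mA cover disj.
rewrite (partition _ mpsiW (powR_ge0E _)) (partition _ mZ_p (powR_ge0E _)).
rewrite !big_seq; apply: lee_sum => c; rewrite mem_undup setTI => cs.
rewrite (eq_integral (fun=> (`|psi c| `^ p)%:E)); last by move=> x /[!inE] ->.
rewrite integral_cst //.
have muAc_fin : mu (A c) \is a fin_num := fin_num_measure mu _ (mA c).
apply: jensen_powR => //.
- exact: measurable_funTS (measurableT_comp (@normr_measurable R setT) mZ).
- by rewrite ltey_eq muAc_fin.
set J := \int[mu]_(x in A c) _.
have [->|Jfin] := eqVneq J +oo; first exact: leey.
have iZ : mu.-integrable (A c) (EFin \o Z).
  apply/integrableP; split; first exact/measurable_EFinP/measurable_funTS.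
  by under eq_integral do rewrite abse_EFin; rewrite ltey.
rewrite -(gee0_abs (measure_ge0 mu (A c))) -abse_EFin -abseM -Zmean //.
apply: (le_trans (le_abse_integral _ (mA c) _)).
  exact/measurable_EFinP/measurable_funTS.
by under eq_integral do rewrite abse_EFin.
Qed.

End fibre_jensen.

Lemma integral_mean_mul d (T : measurableType d) (R : realType)
    (mu : {finite_measure set T -> \bar R}) (E : set T) (h : T -> R) :
  measurable E -> mu.-integrable E (EFin \o h) ->
  (\int[mu]_(x in E) (h x)%:E =
   (fine (\int[mu]_(x in E) (h x)%:E) / fine (mu E))%:E * mu E)%E.
Proof.
move=> mE ih; have [muE0|muE_neq0] := eqVneq (mu E) 0%E.
  by rewrite muE0 mule0 null_set_integral //; exact: measurable_int ih.
have muE_fin : mu E \is a fin_num := fin_num_measure mu _ mE.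
rewrite -[in RHS](fineK muE_fin) -EFinM divfK ?fineK ?integrable_fin_num //.
by rewrite fine_eq0.
Qed.

Lemma beta_mem (R : realType) (B : nat) (I : 'I_B -> interval R) (z : R) (j : 'I_B) :
  binning_scheme I -> z \in I j -> beta I z = Some j.
Proof.
move=> [_ [disj _]] zj; rewrite /beta; case: pickP => [k zk|/(_ j)].
  by rewrite (disj _ _ _ zk zj).
by rewrite zj.
Qed.

Section binning.
Context d (Omega : measurableType d) (R : realType) (P : probability Omega R).
Context dX (Xs : measurableType dX) (X : Omega -> Xs) (f : Xs -> R).
Context (B : nat) (I : 'I_B -> interval R).
Hypotheses (mX : measurable_fun setT X) (mf : measurable_fun setT f).
Hypotheses (f01 : forall x, 0 <= f x <= 1) (binI : binning_scheme I).

Local Notation fX := (f \o X).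
Local Notation bin_mean := (bin_mean P X f I).
Local Notation bin j := (fX @^-1` [set z | z \in I j]).

Definition bin_step (z : R) : R :=
  if beta I z is Some j then bin_mean j else 0.

Let mfX : measurable_fun setT fX := measurableT_comp mf mX.

Let mbin j : measurable (bin j).
Proof. by rewrite -[bin j]setTI; exact: mfX. Qed.

Let fX_ge0 w : 0 <= fX w. Proof. by case/andP: (f01 (X w)). Qed.

Let integrable_fX (A : set Omega) : measurable A -> P.-integrable A (EFin \o fX).
Proof.
move=> mA; apply: measurable_bounded_integrable => //.
- by rewrite (le_lt_trans (probability_le1 P mA)) ?ltry.
- exact: measurable_funTS.
- exists 1; split => // M M1 w _ /=; have /andP[f0 f1] := f01 (X w).
  by rewrite ger0_norm // (le_trans f1) // ltW.
Qed.

Let fX_bin w : exists j, fX w \in I j.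
Proof. by apply/binI.2.2; exact: f01. Qed.

Lemma bin_step_indicE :
  bin_step = fun z => \sum_(j < B) bin_mean j * \1_[set z | z \in I j] z.
Proof.
apply/funext => z; have [[j zj]|zI] := pselect (exists j, z \in I j).
  rewrite /bin_step (beta_mem binI zj) (bigD1 j) //= indicE mem_set // mulr1.
  rewrite big1 ?addr0 // => k kj; rewrite indicE memNset ?mulr0 //= => zk.
  by move/eqP: kj; apply; exact: binI.2.1 zk zj.
rewrite /bin_step /beta; case: pickP => [j zj|_]; first by case: zI; exists j.
by rewrite big1 // => j _; rewrite indicE memNset ?mulr0 //= => zj; apply: zI; exists j.
Qed.

Lemma measurable_bin_step : measurable_fun setT bin_step.
Proof.
by rewrite bin_step_indicE; apply: measurable_sum => j; apply: measurable_funM.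
Qed.

Lemma integral_bin j : (\int[P]_(w in bin j) (fX w)%:E = (bin_mean j)%:E * P (bin j))%E.
Proof. exact: integral_mean_mul (integrable_fX (mbin j)). Qed.

Local Notation fibre c := ((bin_step \o fX) @^-1` [set c]).

Let mfibre c : measurable (fibre c).
Proof.
have mW := measurableT_comp measurable_bin_step mfX.
by rewrite -[fibre c]setTI; exact: mW.
Qed.

Lemma integral_binned_fibre c :
  (\int[P]_(w in fibre c) (fX w)%:E = c%:E * P (fibre c))%E.
Proof.
have cover w : fibre c w -> exists2 j, j \in enum 'I_B & bin j w.
  by move=> _; have [j wj] := fX_bin w; exists j; rewrite ?mem_enum.
have disj j k w : j \in enum 'I_B -> k \in enum 'I_B -> bin j w -> bin k w -> j = k.
  by move=> _ _; exact: binI.2.1.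
have partition := ge0_integral_partition P (mfibre c) (enum_uniq 'I_B) mbin cover disj.
rewrite -[P (fibre c)]mul1e -integral_cst // !partition; last 4 first.
- exact/measurable_EFinP/measurable_funTS.
- by move=> w _; rewrite lee_fin; exact: fX_ge0.
- exact: measurable_cst.
- by move=> w _; rewrite lee_fin.
rewrite ge0_sume_distrr; last by move=> j _; rewrite integral_cst ?mul1e //; exact: measurableI.
apply: eq_bigr => j _; rewrite integral_cst ?mul1e; last exact: measurableI.
have [<-|mean_neq_c] := eqVneq (bin_mean j) c.
  suff -> : fibre (bin_mean j) `&` bin j = bin j by exact: integral_bin.
  apply/seteqP; split => [w []//|w wj]; split => //.
  by rewrite /= /bin_step (beta_mem binI wj).
suff -> : fibre c `&` bin j = set0 by rewrite integral_set0 measure0 mule0.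
apply/seteqP; split => // w [+ wj]; rewrite /= /bin_step (beta_mem binI wj).
by move/eqP; rewrite (negbTE mean_neq_c).
Qed.

Lemma integral_residual_fibre (Y : Omega -> R) (g gB : R -> R) c :
  cond_exp_version P Y fX g -> cond_exp_version P Y (bin_step \o fX) gB ->
  P.-integrable (fibre c) (EFin \o (fun w => fX w - g (fX w))) ->
  (\int[P]_(w in fibre c) (fX w - g (fX w))%:E = (c - gB c)%:E * P (fibre c))%E.
Proof.
move=> [_ cond_g] [_ cond_gB] iZ.
have igfX : P.-integrable (fibre c) (EFin \o (g \o fX)).
  apply: eq_integrable (integrableB (mfibre c) (integrable_fX (mfibre c)) iZ) => //.
  by move=> w _ /=; rewrite -EFinB opprB addrC subrK.
have mstep_c : measurable (bin_step @^-1` [set c]).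
  by rewrite -[_ @^-1` _]setTI; exact: measurable_bin_step.
under eq_integral do rewrite EFinB.
rewrite integralB_EFin // ?integrable_fX // integral_binned_fibre.
rewrite -(cond_g _ mstep_c) (cond_gB _ (measurable_set1 c)).
rewrite (eq_integral (fun=> (gB c)%:E)); last by move=> w /[!inE] ->.
by rewrite integral_cst // EFinB muleBl // fin_num_measure.
Qed.

End binning.

Theorem mainTheorem3 (d : measure_display) (Omega : measurableType d)
  (R : realType) (P : probability Omega R)
  (dX : measure_display) (Xs : measurableType dX)
  (X : Omega -> Xs) (Y : Omega -> R) (f : Xs -> R)
  (B : nat) (I : 'I_B -> interval R) (p : R)
  (g gB : R -> R) :
  1 <= p ->
  measurable_fun setT X ->
  measurable_fun setT Y ->
  (forall w, Y w = 0 \/ Y w = 1) ->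
  measurable_fun setT f ->
  (forall x, 0 <= f x <= 1) ->
  binning_scheme I ->
  cond_exp_version P Y (f \o X) g ->
  cond_exp_version P Y (binned_model P X f I \o X) gB ->
  (lp_CE P X Y (binned_model P X f I) gB p <= lp_CE P X Y f g p)%E.
Proof.
move=> p1 mX _ _ mf f01 binI cond_g cond_gB.
have [[mg _] [mgB _]] := (cond_g, cond_gB).
have mfX := measurableT_comp mf mX.
apply: le_Lnorm; first exact: lt_le_trans ltr01 p1.
apply: (le_integral_powR_fibres (W := bin_step P X f I \o (f \o X))
  (psi := fun c => c - gB c) (s := [seq bin_mean P X f I j | j <- enum 'I_B])) => //.
- exact: measurableT_comp (measurable_bin_step P X f binI) mfX.
- by apply: measurable_funB => //; exact: measurableT_comp mg mfX.
- by apply: measurable_funB.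
- move=> w; have [j wj] : exists j, f (X w) \in I j by apply/binI.2.2.
  by rewrite /= /bin_step (beta_mem binI wj) map_f // mem_enum.
- by move=> c _; exact: (integral_residual_fibre mX mf f01 binI cond_g cond_gB).
Qed.
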